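(* Let $\overline X,\overline Y$ be independent balanced real random variables with finite second moments, and let $E\in\mathbb{R}$. Then \[ \operatorname{Var}\big|\overline X+\overline Y+E\big| \;\ge\; \frac{1}{4}\max\big\{\operatorname{Var}|\overline X+E|,\ \operatorname{Var}|\overline Y+E|\big\}. \]
   Context: A random variable is balanced if it has expectation $0$. $\operatorname{Var} Z=\mathbb{E}[Z^2]-(\mathbb{E}Z)^2$. *)

From HB Require Import structures.
From mathcomp Require Import all_boot all_order all_algebra.
From mathcomp Require Import all_classical all_reals all_analysis.
Set Implicit Arguments. Unset Strict Implicit. Unset Printing Implicit Defensive.
Import Order.TTheory GRing.Theory Num.Theory.

Local Open Scope classical_set_scope.
Local Open Scope ring_scope.

Definition independent_rv {d} {T : measurableType d} {R : realType}
  (P : probability T R) (X Y : T -> R) : Prop :=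
  forall A B : set R, measurable A -> measurable B ->
    P (X @^-1` A `&` Y @^-1` B) = (P (X @^-1` A) * P (Y @^-1` B))%E.

Definition balanced {d} {T : measurableType d} {R : realType}
  (P : probability T R) (X : T -> R) : Prop := ('E_P[X] = 0)%E.

From HB Require Import structures.
From mathcomp Require Import all_boot all_order all_algebra.
From mathcomp Require Import all_classical all_reals all_analysis.
From mathcomp Require Import measurable_realfun ring lra.
Import Order.TTheory GRing.Theory Num.Theory numFieldNormedType.Exports.

Set Implicit Arguments. Unset Strict Implicit. Unset Printing Implicit Defensive.

(* Write Z = X + E and g(z) = E|z + Y|.  By independence E|Z + Y| = E g(Z) and
   E(Z + Y)^2 = E Z^2 + E Y^2, so Var|Z + Y| >= Var|Z| / 4 (and the same with X
   and Y exchanged) follows from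
     (E g(Z))^2 <= 3/4 E Z^2 + E Y^2 + (E|Z|)^2 / 4,
   which is obtained by averaging twice, over x and y distributed as Z, the
   deterministic two-point inequality
     2 g(x) g(y) <= x^2 + y^2 + 2 E Y^2 - (|x| - |y|)^2 / 4,
   i.e. Var|x + Y| + Var|y + Y| + (g x - g y)^2 >= (|x| - |y|)^2 / 4.
   For y <= x put u = |x + Y|, v = |y + Y| and W = u + v - (x - y) >= 0.  Where
   W > 0 the numbers x + Y and y + Y have the same sign, so (u - v)^2 = (x - y)^2;
   everywhere |x + y + 2Y - (u - v)| <= W; and Cauchy-Schwarz on {W > 0} bounds
   (E W)^2 by P(W > 0) E W^2.  Since E Y = 0, these moment relations force the
   two-point inequality. *)

Section real_inequalities.
Local Open Scope ring_scope.
Variable R : realFieldType.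
Implicit Types a b : R.

Lemma sqr_le_of_quadratic_ge0 (a b c : R) : 0 <= a ->
  (forall l, 0 <= a * l ^+ 2 - 2 * b * l + c) -> b ^+ 2 <= a * c.
Proof.
move=> a_ge0 q; have [a_gt0|a_le0] := ltrP 0 a.
  have := q (b / a).
  have -> : a * (b / a) ^+ 2 - 2 * b * (b / a) + c = (a * c - b ^+ 2) / a.
    by field; rewrite gt_eqF.
  by rewrite pmulr_lge0 ?invr_gt0// subr_ge0.
have a0 : a = 0 by apply/eqP; rewrite eq_le a_le0 a_ge0.
rewrite a0 mul0r; have [-> | b_neq0] := eqVneq b 0; first by rewrite expr0n.
have := q ((c + 1) / (2 * b)); rewrite a0.
have -> : 0 * ((c + 1) / (2 * b)) ^+ 2 - 2 * b * ((c + 1) / (2 * b)) + c = -1.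
  by field.
by rewrite ler0N1.
Qed.

Lemma sqr_normB_eq a b : b <= a -> a - b < `|a| + `|b| ->
  (`|a| - `|b|) ^+ 2 = (a - b) ^+ 2.
Proof.
move=> ba; have [a0|a0] := lerP 0 a; have [b0|b0] := lerP 0 b;
  rewrite ?(ger0_norm a0) ?(ger0_norm b0) ?(ltr0_norm a0) ?(ltr0_norm b0) => lt;
  first [ring | exfalso; lra].
Qed.

Lemma dist_addr_normB_le a b : b <= a ->
  `|a + b - (`|a| - `|b|)| <= `|a| + `|b| - (a - b).
Proof.
move=> ba; have [a0|a0] := lerP 0 a; have [b0|b0] := lerP 0 b;
  rewrite ?(ger0_norm a0) ?(ger0_norm b0) ?(ltr0_norm a0) ?(ltr0_norm b0)
          ler_norml; apply/andP; split; lra.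
Qed.

(* To be read with m = ||x| - |y||, k = x - y, s = x + y, e = E(u - v),
   V = E(u - v)^2, rho = E W, Q = E W^2 and pi = P(W > 0). *)
Lemma moment_bound (m k s e V rho Q pi : R) :
  0 <= m -> m <= k -> m <= `|s| -> `|s - e| <= rho ->
  k ^+ 2 * pi <= V -> e ^+ 2 <= V -> rho ^+ 2 <= pi * Q -> 0 <= Q ->
  0 <= pi -> pi <= 1 ->
  m ^+ 2 / 2 <= V + e ^+ 2 + Q - rho ^+ 2.
Proof.
move=> m0 mk ms se kV eV rQ Q0 pi0 pi1.
have rQ1 : rho ^+ 2 <= Q by nra.
have [me|em] := lerP (m ^+ 2 / 4) (e ^+ 2); first lra.
have e_lt : `|e| < m / 2.
  rewrite -(ltr_pXn2r (n := 2)) ?nnegrE ?divr_ge0// real_normK ?num_real//.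
  by rewrite expr_div_n; lra.
have s_le : `|s| <= `|s - e| + `|e| by rewrite (le_trans _ (ler_normD _ _))// subrK.
have m_rho : m / 2 <= rho by lra.
have mrho2 : m ^+ 2 / 4 <= rho ^+ 2 by nra.
have m_gt0 : 0 < m by nra.
have pi_gt0 : 0 < pi.
  rewrite lt_def pi0 andbT; apply/eqP => pi_eq0.
  by move: rQ; rewrite pi_eq0 mul0r; nra.
have km : m ^+ 2 <= k ^+ 2 by rewrite lerXn2r ?nnegrE// (le_trans m0).
suff : pi * (m ^+ 2 / 2) <= pi * (V + e ^+ 2 + Q - rho ^+ 2) by rewrite ler_pM2l.
have pos : 0 <= m ^+ 2 * ((pi - 3 / 8) ^+ 2 + 7 / 64) by apply: mulr_ge0; nra.
nra.
Qed.

End real_inequalities.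

Section expectR.
Local Open Scope ring_scope.
Context d (T : measurableType d) (R : realType) (P : probability T R).

(* [fine] maps an infinite expectation to 0, hence the integrability hypotheses below. *)
Definition expectR (f : T -> R) : R := fine 'E_P[f]%E.

Local Notation L1 f := (f \in Lfun P 1%E).
Local Notation L2 f := (f \in Lfun P 2%:E).

Lemma L1D f g : L1 f -> L1 g -> L1 (fun w => f w + g w).
Proof. exact: rpredD. Qed.

Lemma L1N f : L1 f -> L1 (fun w => - f w).
Proof. exact: Lfun_oppr_closed. Qed.

Lemma L1Z k f : L1 f -> L1 (fun w => k * f w).
Proof. exact: rpredZ. Qed.

Lemma L1cst c : L1 (fun _ => c).
Proof. exact: Lfun_cst. Qed.

Lemma L2D f g : L2 f -> L2 g -> L2 (fun w => f w + g w).
Proof. exact: (Lfun_addr_closed P (lee1n 2)).2. Qed.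

Lemma L2N f : L2 f -> L2 (fun w => - f w).
Proof. exact: Lfun_oppr_closed. Qed.

Lemma L2cst c : L2 (fun _ => c).
Proof. exact: Lfun_cst. Qed.

Lemma L2_L1 f : L2 f -> L1 f.
Proof. by apply: Lfun_subset12; rewrite fin_num_measure. Qed.

Lemma L2M f g : L2 f -> L2 g -> L1 (fun w => f w * g w).
Proof. exact: Lfun2_mul_Lfun1. Qed.

Lemma L2_sqr f : L2 f -> L1 (fun w => f w ^+ 2).
Proof.
by move=> f2; rewrite (_ : (fun w => _) = fun w => f w * f w)//; exact: L2M.
Qed.

Lemma L2_norm f : L2 f -> L2 (fun w => `|f w|).
Proof.
case/andP; rewrite !inE/= => mf ff; apply/andP; split; rewrite inE/=.
  exact: measurableT_comp.
rewrite /finite_norm.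
under [X in ('N[_]__[X])%E]eq_fun => x do rewrite -abse_EFin.
by rewrite Lnorm_abse.
Qed.

Lemma Lfun_measurable p (f : T -> R) : f \in Lfun P p -> measurable_fun setT f.
Proof. by case/andP; rewrite inE. Qed.

Lemma L1_le_norm (f g : T -> R) : measurable_fun setT f -> L1 g ->
  (forall w, `|f w| <= `|g w|) -> L1 f.
Proof.
move=> mf /Lfun1_integrable g1 fg; apply/Lfun1_integrable.
apply: (le_integrable measurableT _ _ g1); first exact/measurable_EFinP.
by move=> w _ /=; rewrite lee_fin.
Qed.

Lemma expectR_EFin f : L1 f -> ('E_P[f] = (expectR f)%:E)%E.
Proof. by move=> f1; rewrite /expectR fineK// expectation_fin_num. Qed.

Lemma expectRD f g : L1 f -> L1 g ->
  expectR (fun w => f w + g w) = expectR f + expectR g.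
Proof.
move=> f1 g1; rewrite /expectR -[fun w => _]/(f \+ g) expectationD//.
by rewrite (expectR_EFin f1) (expectR_EFin g1).
Qed.

Lemma expectRZ k f : L1 f -> expectR (fun w => k * f w) = k * expectR f.
Proof.
move=> f1; rewrite /expectR (_ : (fun w => _) = k \o* f); last first.
  by apply/funext => w /=; rewrite mulrC.
by rewrite expectationZl// (expectR_EFin f1).
Qed.

Lemma expectRN f : L1 f -> expectR (fun w => - f w) = - expectR f.
Proof.
move=> f1; rewrite (_ : (fun w => _) = fun w => -1 * f w).
  by rewrite expectRZ// mulN1r.
by apply/funext => w; rewrite mulN1r.
Qed.

Lemma expectR_cst c : expectR (fun _ => c) = c.
Proof. by rewrite /expectR -[fun _ => c]/(cst c) expectation_cst. Qed.

Lemma expectR_ge0 f : (forall w, 0 <= f w) -> 0 <= expectR f.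
Proof. by move=> f0; rewrite /expectR fine_ge0// expectation_ge0. Qed.

Lemma expectR_le f g : L1 f -> L1 g -> (forall w, f w <= g w) ->
  expectR f <= expectR g.
Proof.
move=> f1 g1 fg; rewrite -subr_ge0 -expectRN// -expectRD ?L1N//.
by apply: expectR_ge0 => w; rewrite subr_ge0.
Qed.

Lemma expectR_norm_le f g : L1 f -> L1 g -> (forall w, `|f w| <= g w) ->
  `|expectR f| <= expectR g.
Proof.
move=> f1 g1 fg; rewrite ler_norml; apply/andP; split.
  rewrite lerNl -expectRN//; apply: expectR_le (L1N f1) g1 _ => w.
  by rewrite (le_trans _ (fg w))// -normrN ler_norm.
by apply: expectR_le => // w; exact: le_trans (ler_norm _) (fg w).
Qed.

End expectR.

(* Integrability side conditions are discharged by following the syntax of the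
   integrand: plain [apply] of the closure lemmas makes unification unfold the
   integrand and becomes very slow on failure. *)
Ltac lfun_hyp :=
  match goal with H : is_true (?f \in ?S) |- is_true (?f \in ?S) => exact: H end.

Ltac lfun_step := first
  [ lfun_hyp
  | apply: L2_L1; lfun_hyp
  | lazymatch goal with
    | |- is_true ((fun _ => ?c) \in _) => first [apply: L1cst | apply: L2cst]
    | |- is_true ((fun _ => (_ + _)%R) \in _) => first [apply: L1D | apply: L2D]
    | |- is_true ((fun _ => (- _)%R) \in _) => first [apply: L1N | apply: L2N]
    | |- is_true ((fun _ => (_ ^+ 2)%R) \in _) => apply: L2_sqr
    | |- is_true ((fun _ => (?k * _)%R) \in _) => apply: L1Z
    | |- is_true ((fun _ => (_ * _)%R) \in _) => apply: L2M
    end ].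

Ltac lfun := solve [repeat lfun_step].

Ltac expectR_lin :=
  rewrite ?(expectRD, expectRN, expectRZ, expectR_cst); try lfun.

Section moments.
Local Open Scope classical_set_scope.
Local Open Scope ring_scope.
Context d (T : measurableType d) (R : realType) (P : probability T R).
Local Notation L1 f := (f \in Lfun P 1%E).
Local Notation L2 f := (f \in Lfun P 2%:E).
Local Notation expectR := (expectR P).

Lemma varianceR f : L2 f ->
  'V_P[f] = (expectR (fun w => f w ^+ 2) - expectR f ^+ 2)%:E.
Proof.
move=> f2; rewrite varianceE// (_ : (f ^+ 2)%R = fun w => f w ^+ 2); last first.
  by apply/funext => w; rewrite !expr2.
by rewrite !expectR_EFin ?L2_sqr ?L2_L1// -EFin_expe -EFinB.
Qed.

Lemma expectR_sqr_le f : L2 f -> expectR f ^+ 2 <= expectR (fun w => f w ^+ 2).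
Proof. by move=> f2; have := variance_ge0 P f; rewrite varianceR// lee_fin subr_ge0. Qed.

Lemma L1_indic (A : set T) : measurable A -> L1 (\1_A : T -> R).
Proof. by move=> mA; apply/Lfun1_integrable; exact: integrable_indic. Qed.

Lemma measurable_neq0 (f : T -> R) :
  measurable_fun setT f -> measurable [set w | f w != 0].
Proof.
move=> mf; have := mf measurableT _ (measurableC (measurable_set1 (0 : R))).
by rewrite setTI; congr measurable; apply/seteqP; split => w /= /eqP.
Qed.

Lemma sqr_expectR_le_support f : L2 f ->
  expectR f ^+ 2 <=
  expectR (\1_[set w | f w != 0] : T -> R) * expectR (fun w => f w ^+ 2).
Proof.
move=> f2; set A := ([set w | f w != 0] : set T).
have A1 : L1 (\1_A : T -> R) := L1_indic (measurable_neq0 (Lfun_measurable f2)).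
apply: sqr_le_of_quadratic_ge0 => [|l].
  by apply: expectR_ge0 => w; rewrite indicE.
have := expectR_ge0 P (fun w => sqr_ge0 (f w - l * \1_A w)).
rewrite (_ : (fun w => _) = fun w =>
  l ^+ 2 * \1_A w + (- (2 * l)) * f w + f w ^+ 2).
  by expectR_lin; lra.
apply/funext => w; rewrite indicE.
have [fw0|fw0] := eqVneq (f w) 0.
  by rewrite memNset ?fw0 /=; [ring | rewrite /A /= fw0 eqxx].
by rewrite mem_set //=; ring.
Qed.

End moments.

Section mean_abs.
Local Open Scope classical_set_scope.
Local Open Scope ring_scope.
Context d (T : measurableType d) (R : realType) (P : probability T R).
Local Notation L1 f := (f \in Lfun P 1%E).
Local Notation L2 f := (f \in Lfun P 2%:E).
Local Notation expectR := (expectR P).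
Variable Y : T -> R.
Hypotheses (Y2 : L2 Y) (Y_balanced : balanced P Y).

Definition mean_abs (x : R) := expectR (fun v => `|x + Y v|).

Let sY := expectR (fun v => Y v ^+ 2).

Lemma L2_abs_shift x : L2 (fun v => `|x + Y v|).
Proof. exact/L2_norm/L2D/Y2/L2cst. Qed.

Lemma expectR_sqr_abs_shift x : expectR (fun v => `|x + Y v| ^+ 2) = x ^+ 2 + sY.
Proof.
have Y0 : expectR Y = 0 by rewrite /expectR Y_balanced.
rewrite (_ : (fun v => _) = fun v => x ^+ 2 + (2 * x) * Y v + Y v ^+ 2).
  by expectR_lin; rewrite Y0 mulr0 addr0.
by apply/funext => v; rewrite real_normK ?num_real//; ring.
Qed.

Lemma mean_abs_ge0 x : 0 <= mean_abs x.
Proof. exact: expectR_ge0. Qed.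

Lemma mean_abs_le x y : mean_abs x <= mean_abs y + `|x - y|.
Proof.
have [ux uy] := (L2_abs_shift x, L2_abs_shift y).
rewrite /mean_abs -[X in _ + X](expectR_cst P) -expectRD; try lfun.
apply: expectR_le => [||v]; try lfun.
by rewrite [x + _](_ : _ = y + Y v + (x - y)) ?ler_normD//; ring.
Qed.

Lemma continuous_mean_abs : continuous mean_abs.
Proof.
move=> x; apply/cvgrPdist_lt => e e0; near=> z.
have : `|mean_abs x - mean_abs z| <= `|x - z|.
  rewrite ler_norml; have := mean_abs_le x z; have := mean_abs_le z x.
  by rewrite distrC => *; apply/andP; split; lra.
by move/le_lt_trans; apply.
Unshelve. all: by end_near.
Qed.

Section two_point.
Variables x y : R.
Hypothesis yx : y <= x.

Let k := x - y.
Let u (v : T) : R := `|x + Y v|.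
Let nu (v : T) : R := `|y + Y v|.
Let W (v : T) : R := u v + nu v - k.
Let pi := expectR (\1_[set v | W v != 0] : T -> R).

Let u2 : L2 u := L2_abs_shift x.
Let nu2 : L2 nu := L2_abs_shift y.
Let W2 : L2 W := L2D (L2D u2 nu2) (L2cst P (- k)).

Let k_eq v : k = (x + Y v) - (y + Y v).
Proof. by rewrite /k; ring. Qed.

Lemma excess_ge0 v : 0 <= W v.
Proof. by rewrite subr_ge0 (k_eq v) (le_trans (ler_norm _) (ler_normB _ _)). Qed.

Lemma sqr_diff_excess_support : k ^+ 2 * pi <= expectR (fun v => (u v - nu v) ^+ 2).
Proof.
have A1 := L1_indic P (measurable_neq0 (Lfun_measurable W2)).
rewrite /pi -expectRZ//; apply: expectR_le => [||v]; try lfun.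
rewrite indicE; have [W0|W0] := eqVneq (W v) 0.
  by rewrite memNset ?mulr0 ?sqr_ge0// /= W0 eqxx.
rewrite mem_set// mulr1 (k_eq v) -sqr_normB_eq ?lerD2r// -(k_eq v).
by rewrite -subr_gt0 lt_def W0 excess_ge0.
Qed.

Lemma dist_mean_abs_le : `|x + y - (mean_abs x - mean_abs y)| <= expectR W.
Proof.
have Y0 : expectR Y = 0 by rewrite /expectR Y_balanced.
have Y1 := L2_L1 Y2.
have -> : x + y - (mean_abs x - mean_abs y) =
    expectR (fun v => (x + y) + 2 * Y v + - (u v - nu v)).
  by expectR_lin; rewrite Y0 mulr0 addr0.
apply: expectR_norm_le => [||v]; try lfun.
have -> : x + y + 2 * Y v - (u v - nu v) =
    (x + Y v) + (y + Y v) - (`|x + Y v| - `|y + Y v|) by rewrite /u /nu; ring.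
by rewrite /W /u /nu (k_eq v) dist_addr_normB_le ?lerD2r.
Qed.

Lemma expectR_excess : expectR W = mean_abs x + mean_abs y - k.
Proof. by rewrite /W; expectR_lin. Qed.

Lemma sqr_mean_abs_diff_le :
  (mean_abs x - mean_abs y) ^+ 2 <= expectR (fun v => (u v - nu v) ^+ 2).
Proof.
have -> : mean_abs x - mean_abs y = expectR (fun v => u v - nu v) by expectR_lin.
by apply: expectR_sqr_le; lfun.
Qed.

Lemma expectR_sqr_diff_excess :
  expectR (fun v => (u v - nu v) ^+ 2) + expectR (fun v => W v ^+ 2) =
  2 * (x ^+ 2 + sY) + 2 * (y ^+ 2 + sY) - 2 * k * (mean_abs x + mean_abs y) + k ^+ 2.
Proof.
rewrite -expectRD; try lfun.
rewrite (_ : (fun v => _) = fun v => 2 * (u v ^+ 2) + 2 * (nu v ^+ 2) +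
  (- (2 * k)) * u v + (- (2 * k)) * nu v + k ^+ 2).
  expectR_lin; rewrite !expectR_sqr_abs_shift.
  by rewrite -[expectR u]/(mean_abs x) -[expectR nu]/(mean_abs y); ring.
by apply/funext => v; rewrite /W; ring.
Qed.

Lemma mean_abs_mul_le_ordered :
  (`|x| - `|y|) ^+ 2 / 4 <= x ^+ 2 + y ^+ 2 + 2 * sY - 2 * mean_abs x * mean_abs y.
Proof.
have A1 := L1_indic P (measurable_neq0 (Lfun_measurable W2)).
have k_ge0 : 0 <= k by rewrite subr_ge0.
have mk : `| `|x| - `|y| | <= k by rewrite -(ger0_norm k_ge0) ler_dist_dist.
have ms : `| `|x| - `|y| | <= `|x + y|.
  by have := ler_dist_dist x (- y); rewrite normrN opprK.
have pi_ge0 : 0 <= pi by apply: expectR_ge0 => v; rewrite indicE.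
have pi_le1 : pi <= 1.
  rewrite -(expectR_cst P 1); apply: expectR_le => [||v]; try lfun.
  by rewrite indicE lern1 leq_b1.
have W2_ge0 : 0 <= expectR (fun v => W v ^+ 2).
  by apply: expectR_ge0 => v; exact: sqr_ge0.
have := moment_bound (normr_ge0 _) mk ms dist_mean_abs_le
  sqr_diff_excess_support sqr_mean_abs_diff_le (sqr_expectR_le_support W2)
  W2_ge0 pi_ge0 pi_le1.
rewrite real_normK ?num_real// expectR_excess.
have := expectR_sqr_diff_excess.
set gx := mean_abs x; set gy := mean_abs y.
have : (gx - gy) ^+ 2 - (gx + gy - k) ^+ 2 = 2 * k * (gx + gy) - k ^+ 2 - 4 * gx * gy.
  by ring.
lra.
Qed.

End two_point.

Lemma mean_abs_mul_le x y :
  (`|x| - `|y|) ^+ 2 / 4 <= x ^+ 2 + y ^+ 2 + 2 * sY - 2 * mean_abs x * mean_abs y.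
Proof.
have [yx|/ltW xy] := lerP y x; first exact: mean_abs_mul_le_ordered.
have := mean_abs_mul_le_ordered xy.
have -> : (`|y| - `|x|) ^+ 2 = (`|x| - `|y|) ^+ 2 by ring.
lra.
Qed.

Lemma L1_mean_abs_comp Z : L1 Z -> L1 (fun w => mean_abs (Z w)).
Proof.
move=> Z1; apply: (L1_le_norm _ (L1D (L1cst P (mean_abs 0)) (Lfun_norm Z1))).
  exact: measurableT_comp (continuous_measurable_fun continuous_mean_abs)
    (Lfun_measurable Z1).
move=> w; rewrite /= (ger0_norm (mean_abs_ge0 _)) ger0_norm ?addr_ge0 ?mean_abs_ge0//.
by have := mean_abs_le (Z w) 0; rewrite subr0.
Qed.

Lemma sqr_expectR_mean_abs_comp_le Z : L2 Z ->
  expectR (fun w => mean_abs (Z w)) ^+ 2 <=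
  3 / 4 * expectR (fun w => Z w ^+ 2) + sY + expectR (fun w => `|Z w|) ^+ 2 / 4.
Proof.
move=> Z2; have Z1 := L2_L1 Z2.
have G1 := L1_mean_abs_comp Z1.
have N1 : L1 (fun w => `|Z w|) := Lfun_norm Z1.
set A := expectR (fun w => Z w ^+ 2).
set M := expectR (fun w => `|Z w|).
set G := expectR (fun w => mean_abs (Z w)).
have avg y : 2 * mean_abs y * G <= 3 / 4 * A + `|y| / 2 * M + (3 / 4 * y ^+ 2 + 2 * sY).
  have : expectR (fun w => 2 * mean_abs y * mean_abs (Z w)) <= expectR (fun w =>
      3 / 4 * Z w ^+ 2 + `|y| / 2 * `|Z w| + (3 / 4 * y ^+ 2 + 2 * sY)).
    apply: expectR_le => [||w]; try lfun.
    have : (`|Z w| - `|y|) ^+ 2 = Z w ^+ 2 - 2 * (`|y| * `|Z w|) + y ^+ 2.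
      by rewrite -[Z w ^+ 2](real_normK (num_real _)) -[y ^+ 2](real_normK (num_real y)); ring.
    have := mean_abs_mul_le (Z w) y; lra.
  by expectR_lin.
have : expectR (fun w => 2 * G * mean_abs (Z w)) <= expectR (fun w =>
    (3 / 4 * A + 2 * sY) + 3 / 4 * Z w ^+ 2 + M / 2 * `|Z w|).
  apply: expectR_le => [||w]; try lfun.
  have := avg (Z w); lra.
by expectR_lin; rewrite -/G -/A -/M; nra.
Qed.

End mean_abs.

Section independence.
Local Open Scope ring_scope.
Context d (T : measurableType d) (R : realType) (P : probability T R).
Local Notation L2 f := (f \in Lfun P 2%:E).
Local Notation expectR := (expectR P).

Definition mfun_of d' (T' : measurableType d') (f : T -> T')
  (mf : measurable_fun setT f) : {mfun T >-> T'} :=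
  HB.pack f (isMeasurableFun.Build _ _ _ _ f mf).

Lemma integral_indep_pair (X Y : T -> R) :
  measurable_fun setT X -> measurable_fun setT Y -> independent_rv P X Y ->
  forall G : R * R -> \bar R, measurable_fun setT G -> (forall z, (0 <= G z)%E) ->
  (\int[P]_w G (X w, Y w) = \int[P]_w \int[P]_v G (X w, Y v))%E.
Proof.
move=> mX mY XY G mG G0.
pose XY' := mfun_of (measurable_fun_pair mX mY).
pose X' := mfun_of mX; pose Y' := mfun_of mY.
have -> : (\int[P]_w G (X w, Y w) = \int[P]_w (G \o XY') w)%E by [].
rewrite -ge0_integral_distribution//.
have -> : (\int[distribution P XY']_z G z =
           \int[distribution P X' \x distribution P Y']_z G z)%E.
  apply: eq_measure_integral => A mA _.
  by apply/esym/product_measure_unique => // B C mB mC.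
rewrite (@fubini_tonelli1 _ _ _ _ _ (distribution P X') (distribution P Y') G)//.
rewrite ge0_integral_distribution//; last first.
- by move=> x; apply: integral_ge0 => y _.
- exact: measurable_fun_fubini_tonelli_F.
apply: eq_integral => w _ /=.
rewrite /fubini_F ge0_integral_distribution//.
exact: measurable_fun_pair2.
Qed.

Variables (X Y : T -> R) (E : R).
Hypotheses (X2 : L2 X) (Y2 : L2 Y) (Y_balanced : balanced P Y).
Hypothesis XY : independent_rv P X Y.

Let mX : measurable_fun setT X := Lfun_measurable X2.
Let mY : measurable_fun setT Y := Lfun_measurable Y2.

Lemma expectR_abs_add_indep :
  expectR (fun w => `|X w + Y w + E|) = expectR (fun w => mean_abs P Y (X w + E)).
Proof.
rewrite /expectR; congr fine; rewrite unlock.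
rewrite (integral_indep_pair mX mY XY (G := fun z => (`|z.1 + z.2 + E|)%:E)) /=; last 2 first.
- apply/measurable_EFinP; apply: measurableT_comp => //.
  by apply: measurable_funD => //; apply: measurable_funD.
- by move=> z; rewrite lee_fin.
apply: eq_integral => w _.
rewrite /mean_abs -expectR_EFin; last exact/L2_L1/L2_abs_shift.
by rewrite unlock; apply: eq_integral => v _; rewrite addrAC.
Qed.

Lemma expectR_sqr_add_indep :
  expectR (fun w => `|X w + Y w + E| ^+ 2) =
  expectR (fun w => (X w + E) ^+ 2) + expectR (fun w => Y w ^+ 2).
Proof.
have XE2 : L2 (fun w => X w + E) := L2D X2 (L2cst P E).
rewrite -[in RHS](expectR_cst P (expectR (fun w => Y w ^+ 2))) -expectRD; try lfun.
under [in RHS]eq_fun => w do rewrite -(expectR_sqr_abs_shift Y2 Y_balanced (X w + E)).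
apply: (congr1 fine); rewrite unlock.
under eq_integral do rewrite real_normK ?num_real//.
rewrite (integral_indep_pair mX mY XY (G := fun z => ((z.1 + z.2 + E) ^+ 2)%:E)) /=; last 2 first.
- apply/measurable_EFinP; apply: measurable_funX.
  by apply: measurable_funD => //; apply: measurable_funD.
- by move=> z; rewrite lee_fin sqr_ge0.
apply: eq_integral => w _; rewrite -expectR_EFin; last exact/L2_sqr/L2_abs_shift.
by rewrite unlock; apply: eq_integral => v _; rewrite real_normK ?num_real// addrAC.
Qed.

Lemma variance_abs_add_indep_ge :
  ('V_P[(fun w => `|X w + Y w + E|)%R] >=
   (4^-1)%:E * 'V_P[(fun w => `|X w + E|)%R])%E.
Proof.
have XE2 : L2 (fun w => X w + E) := L2D X2 (L2cst P E).
have XYE2 : L2 (fun w => X w + Y w + E) := L2D (L2D X2 Y2) (L2cst P E).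
rewrite !varianceR ?L2_norm// -EFinM lee_fin.
rewrite expectR_abs_add_indep expectR_sqr_add_indep.
under [X in expectR X](eq_fun) do rewrite real_normK ?num_real//.
have := sqr_expectR_mean_abs_comp_le Y2 Y_balanced XE2.
lra.
Qed.

End independence.

Lemma independent_rvC d (T : measurableType d) (R : realType)
  (P : probability T R) (X Y : T -> R) :
  independent_rv P X Y -> independent_rv P Y X.
Proof. by move=> XY A B mA mB; rewrite setIC XY// muleC. Qed.

Theorem lemma7 (d : measure_display) (T : measurableType d) (R : realType)
  (P : probability T R) (X Y : T -> R) (E : R) :
  independent_rv P X Y -> balanced P X -> balanced P Y ->
  X \in Lfun P 2%:E -> Y \in Lfun P 2%:E ->
  ('V_P[(fun w => `|X w + Y w + E|)%R] >=
   (4%:R^-1)%:E * maxe 'V_P[(fun w => `|X w + E|)%R] 'V_P[(fun w => `|Y w + E|)%R])%E.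
Proof.
move=> XY X0 Y0 X2 Y2.
have VX := variance_abs_add_indep_ge E X2 Y2 Y0 XY.
have VY := variance_abs_add_indep_ge E Y2 X2 X0 (independent_rvC XY).
rewrite (_ : (fun w => `|Y w + X w + E|)%R = (fun w => `|X w + Y w + E|)%R) in VY.
  by have [] := leP ('V_P[(fun w => `|X w + E|)%R])%E ('V_P[(fun w => `|Y w + E|)%R])%E.
by apply/funext => w; rewrite (addrC (Y w)).
Qed.
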